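(* Let $\mathfrak{I}=(\mathcal{I},[\mathcal{F}_1,\dots,\mathcal{F}_k],\mathcal{X},\pi,\sim,\mathcal{S})$ be a domain constrained interpretation and $C_1,\dots,C_4,D_1,\dots,D_4$ natural concepts such that $(C_i\sqcap D_i)^{\mathcal{I}}\neq\emptyset$ for $i\in\{1,2,3,4\}$ and $\mathfrak{I}$ satisfies the analogy assertions $C_1:C_2::C_3:C_4$ and $D_1:D_2::D_3:D_4$. Then $\mathfrak{I}$ also satisfies $(C_1\sqcap D_1):(C_2\sqcap D_2)::(C_3\sqcap D_3):(C_4\sqcap D_4)$.
   Context: Concepts: $C,D::=\top\mid\bot\mid A\mid C\sqcap D\mid \exists r.C\mid N$; natural concepts: $N,N'::=A'\mid N\sqcap N'\mid N\bowtie N'\mid \exists r'.N$, with $A$ a concept name, $A'$ a natural concept name, $r$ a role name, $r'$ an intra-domain role name. A domain constrained interpretation is $\mathfrak{I}=(\mathcal{I},[\mathcal{F}_1,\dots,\mathcal{F}_k],\mathcal{X},\pi,\sim,\mathcal{S})$ where $\mathcal{I}=(\Delta^{\mathcal{I}},\cdot^{\mathcal{I}})$ is a classical DL interpretation, $[\mathcal{F}_1,\dots,\mathcal{F}_k]$ partitions a nonempty finite set $\mathcal{F}$, $\mathcal{X}\subseteq2^{\mathcal{F}}$ with $\mathcal{F}\in\mathcal{X}$, $\pi:\Delta^{\mathcal{I}}\to2^{\mathcal{F}}$, $\sim$ an equivalence relation on $\{1,\dots,k\}$, $\mathcal{S}=\{\sigma_{(s,t)}\mid(s,t)\in\sim\}$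 with $\sigma_{(s,t)}:\mathcal{F}_s\to\mathcal{F}_t$ bijections. With $\mathcal{C}=\{G\subseteq\mathcal{F}\mid X\not\subseteq G\ \forall X\in\mathcal{X}\}$ and $\mathcal{C}^i=\{G\in\mathcal{C}\mid G\subseteq\mathcal{F}_i\}$ it is required: (1) $X\not\subseteq\pi(d)$ for all $d$, $X\in\mathcal{X}$; (2) each $G\in\mathcal{C}$ is $\pi(d)$ for some $d$; (3) $\sigma_{(s,t)}^{-1}=\sigma_{(t,s)}$, $\sigma_{(t,u)}\circ\sigma_{(s,t)}=\sigma_{(s,u)}$; (4) $\sigma_{(i,j)}(G)\in\mathcal{C}$ for $G\in\mathcal{C}^i$, $(i,j)\in\sim$; (5) $\{f,g\}\in\mathcal{X}$ whenever $f\in\mathcal{F}_i$, $g\in\mathcal{F}_j$, $(i,j)\in\sim$, $i\neq j$. $\varphi(C)=\bigcap\{\pi(d)\mid d\in C^{\mathcal{I}}\}$ ($=\mathcal{F}$ if $C^{\mathcal{I}}=\emptyset$). Concepts are interpreted as usual (in particular $(C\sqcap D)^{\mathcal{I}}=C^{\mathcal{I}}\cap D^{\mathcal{I}}$), with $(N\bowtie N')^{\mathcal{I}}=\{d\mid\varphi(N)\cap\varphi(N')\subseteq\pi(d)\}$, and every intra-domain role name $r$ interpreted as an intra-domain relation: there is $\kappa_r:2^{\mathcal{F}}\to2^{\mathcal{F}}$ with $(\exists r.C)^{\mathcal{I}}=\{d\mid\kappa_r(\varphi(C))\subseteq\pi(d)\}$ for all $C$, $\kappa_r(G)=\bigcup_i\kappa_r(G\cap\mathcal{F}_i)$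 for $G\in\mathcal{C}$, $\kappa_r(G)\subseteq\mathcal{F}_i$ for $G\in\mathcal{C}^i$, $\kappa_r(\sigma_{(i,j)}(G))=\sigma_{(i,j)}(\kappa_r(G))$ for $(i,j)\in\sim$, $G\in\mathcal{C}^i$, and $\kappa_r(G)\neq\emptyset$ for $G\in\mathcal{C}^i\setminus\{\emptyset\}$. $\delta(C)=\{i\mid\mathcal{F}_i\cap\varphi(C)\neq\emptyset\}$. For $U=\{(s_1,t_1),\dots,(s_l,t_l)\}\subseteq\sim$ with pairwise distinct $s_i$ and pairwise distinct $t_i$, the domain translation $\sigma_U:\mathcal{F}\to\mathcal{F}$ maps $f\in\mathcal{F}_{s_i}$ to $\sigma_{(s_i,t_i)}(f)$ and fixes all other features; $\mathrm{src}(U)=\{s_i\}$, $\mathrm{tgt}(U)=\{t_i\}$. $\mu(C,D)$ is the set of $\sigma_U$ with $\varphi(D)=\sigma_U(\varphi(C))$, $\mathrm{src}(U)\subseteq\delta(C)$, $\mathrm{tgt}(U)\cap(\delta(C)\setminus\mathrm{src}(U))=\emptyset$. An analogy assertion $C_1:C_2::D_1:D_2$ (between natural concepts) is satisfied in $\mathfrak{I}$ iff $\mu(C_1,C_2)\cap\mu(D_1,D_2)\neq\emptyset$. *)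

From mathcomp Require Import all_boot.
From mathcomp Require Import boolp.

Set Implicit Arguments.
Unset Strict Implicit.
Unset Printing Implicit Defensive.

Inductive concept (CN RN : Type) : Type :=
  | CTop
  | CBot
  | CAtom of CN
  | CAnd of concept CN RN & concept CN RN
  | CEx of RN & concept CN RN
  | CBow of concept CN RN & concept CN RN.

Arguments CTop {CN RN}.
Arguments CBot {CN RN}.
Arguments CAtom {CN RN}.
Arguments CAnd {CN RN}.
Arguments CEx {CN RN}.
Arguments CBow {CN RN}.

(* Natural concepts: N ::= A' | N and N' | N bowtie N' | exists r'.N,
   where natCN marks natural concept names and intra marks intra-domain
   role names. *)
Fixpoint natural (CN RN : Type) (natCN : CN -> Prop) (intra : RN -> Prop)
    (C : concept CN RN) : Prop :=
  match C with
  | CAtom A => natCN A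
  | CAnd N N' => natural natCN intra N /\ natural natCN intra N'
  | CBow N N' => natural natCN intra N /\ natural natCN intra N'
  | CEx r N => intra r /\ natural natCN intra N
  | _ => False
  end.

Section DCI.
Variables (CN RN : Type) (F : finType) (k : nat) (Delta : Type).

(* The data of a domain constrained interpretation
   (I, [F_1,...,F_k], X, pi, ~, S): the feature set is the finite type F,
   the partition into F_1..F_k is given by blk (F_i = blk^-1(i)),
   Delta is the domain of the classical interpretation I, cnI / rnI interpret
   concept and role names, eqv is ~, and sigma s t is sigma_(s,t)
   (only its restriction to F_s matters). *)
Record dci := DCI {
  blk : F -> 'I_k;
  Xc : {set {set F}};
  pi : Delta -> {set F};
  eqv : rel 'I_k;
  sigma : 'I_k -> 'I_k -> F -> F;
  cnI : CN -> Delta -> Prop;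
  rnI : RN -> Delta -> Delta -> Prop }.

Variable I : dci.

Definition Fb (i : 'I_k) : {set F} := [set f | blk I f == i].

Definition consistent (G : {set F}) : bool :=
  [forall X in Xc I, ~~ (X \subset G)].

(* phi of an extension: intersection of pi(d), d in S (= F if S empty) *)
Definition phi_of (S : Delta -> Prop) : {set F} :=
  [set f | `[< forall d, S d -> f \in pi I d >]].

Fixpoint interp (C : concept CN RN) : Delta -> Prop :=
  match C with
  | CTop => fun _ => True
  | CBot => fun _ => False
  | CAtom A => cnI I A
  | CAnd C D => fun d => interp C d /\ interp D d
  | CEx r C => fun d => exists e, rnI I r d e /\ interp C e
  | CBow N N' => fun d =>
      (phi_of (interp N) :&: phi_of (interp N')) \subset pi I d
  end.

Definition phi (C : concept CN RN) : {set F} := phi_of (interp C).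

Definition intra_domain_relation (r : RN) : Prop :=
  exists kappa : {set F} -> {set F},
    [/\ (forall (C : concept CN RN) d,
           interp (CEx r C) d <-> kappa (phi C) \subset pi I d),
        (forall G, consistent G ->
           kappa G = \bigcup_(i < k) kappa (G :&: Fb i)),
        (forall i G, consistent G -> G \subset Fb i -> kappa G \subset Fb i),
        (forall i j G, eqv I i j -> consistent G -> G \subset Fb i ->
           kappa (sigma I i j @: G) = sigma I i j @: kappa G) &
        (forall i G, consistent G -> G \subset Fb i -> G != set0 ->
           kappa G != set0)].

Definition is_dci (natCN : CN -> Prop) (intra : RN -> Prop) : Prop :=
  [/\
      inhabited Delta,
    [/\
      0 < #|F| /\ (forall i : 'I_k, exists f, blk I f = i),
      setT \in Xc I,
      (forall d, consistent (pi I d)) &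
      (forall G, consistent G -> exists d, pi I d = G)],
      [/\ reflexive (eqv I), symmetric (eqv I) & transitive (eqv I)],
      [/\ (forall s t f, eqv I s t -> f \in Fb s -> sigma I s t f \in Fb t),
          (forall s t f, eqv I s t -> f \in Fb s ->
             sigma I t s (sigma I s t f) = f),
          (forall s t u f, eqv I s t -> eqv I t u -> f \in Fb s ->
             sigma I t u (sigma I s t f) = sigma I s u f) &
      (forall i j G, eqv I i j -> consistent G -> G \subset Fb i ->
         consistent (sigma I i j @: G))] &
      [/\
          (forall i j f g, eqv I i j -> i != j -> f \in Fb i -> g \in Fb j ->
             [set f; g] \in Xc I),
          (forall A, natCN A -> forall d,
             cnI I A d <-> phi (CAtom A) \subset pi I d) &
          (forall r, intra r -> intra_domain_relation r)]].

Definition deltaC (C : concept CN RN) : {set 'I_k} :=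
  [set i | Fb i :&: phi C != set0].

Definition valid_U (U : {set 'I_k * 'I_k}) : Prop :=
  [/\ (forall p, p \in U -> eqv I p.1 p.2),
      (forall p q, p \in U -> q \in U -> p.1 = q.1 -> p = q) &
      (forall p q, p \in U -> q \in U -> p.2 = q.2 -> p = q)].

Definition srcU (U : {set 'I_k * 'I_k}) : {set 'I_k} := [set p.1 | p in U].
Definition tgtU (U : {set 'I_k * 'I_k}) : {set 'I_k} := [set p.2 | p in U].

Definition sigmaU (U : {set 'I_k * 'I_k}) (f : F) : F :=
  match [pick p in U | p.1 == blk I f] with
  | Some p => sigma I p.1 p.2 f
  | None => f
  end.

Definition in_mu (C D : concept CN RN) (tau : F -> F) : Prop :=
  exists U, [/\ valid_U U, tau =1 sigmaU U,
     phi D = tau @: phi C,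
     srcU U \subset deltaC C &
     tgtU U :&: (deltaC C :\: srcU U) == set0].

Definition sat_analogy (C1 C2 D1 D2 : concept CN RN) : Prop :=
  exists tau, in_mu C1 C2 tau /\ in_mu D1 D2 tau.

End DCI.

From Pilot Require Import Defs.
From mathcomp Require Import all_boot.
From mathcomp Require Import boolp.

Set Implicit Arguments.
Unset Strict Implicit.
Unset Printing Implicit Defensive.

(* Let U and V be the domain pairs behind the translations τ (for the C's) and
   τ' (for the D's).  A satisfiable concept E has all its features inside one
   π(d), so by condition (5) no two distinct ~-related domains occur in δ(E).
   For E = C_i ⊓ D_i, whose φ is φ(C_i) ∪ φ(D_i) because C_i and D_i are
   natural, this makes U ∪ V a valid set of pairs, makes σ_(U ∪ V) agree with
   σ_U on φ(C_i) and with σ_V on φ(D_i), and makes the target condition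
   automatic.  Moreover σ_(U ∪ V) is determined by τ and τ' alone (it is τ where
   τ moves a feature and τ' elsewhere), so one translation witnesses both
   analogies. *)

Definition merge_transl (F : eqType) (tau tau' : F -> F) (f : F) : F :=
  if tau f != f then tau f else tau' f.

Section Translations.
Variables (CN RN : Type) (F : finType) (k : nat) (Delta : Type).
Variable I : dci CN RN F k Delta.
Implicit Types (C D E : concept CN RN) (U V W : {set 'I_k * 'I_k}).

Definition eqv_free (S : {set 'I_k}) : Prop :=
  {in S &, forall i j, eqv I i j -> i = j}.

Lemma phi_sub C d : interp I C d -> phi I C \subset Defs.pi I d.
Proof. by move=> Cd; apply/subsetP => f; rewrite inE => /asboolP; apply. Qed.

Lemma sub_phi C (G : {set F}) :
  (forall d, interp I C d -> G \subset Defs.pi I d) -> G \subset phi I C.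
Proof.
move=> GC; apply/subsetP => f Gf; rewrite inE; apply/asboolP => d Cd.
exact: subsetP (GC d Cd) f Gf.
Qed.

Lemma blk_deltaC C f : f \in phi I C -> blk I f \in deltaC I C.
Proof.
by move=> Cf; rewrite inE; apply/set0Pn; exists f; rewrite in_setI Cf inE eqxx.
Qed.

Lemma deltaCP C i : reflect (exists2 f, f \in phi I C & blk I f = i)
  (i \in deltaC I C).
Proof.
apply: (iffP idP) => [|[f Cf <-]]; last exact: blk_deltaC.
rewrite inE => /set0Pn [f /setIP [Bf Cf]].
by exists f => //; move: Bf; rewrite inE => /eqP.
Qed.

Lemma deltaC_and C D : phi I (CAnd C D) = phi I C :|: phi I D ->
  deltaC I (CAnd C D) = deltaC I C :|: deltaC I D.
Proof.
by move=> phiCD; apply/setP => i; rewrite !inE phiCD setIUr setU_eq0 negb_and.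
Qed.

Lemma consistent_sub (G H : {set F}) :
  consistent I H -> G \subset H -> consistent I G.
Proof.
move=> /forall_inP consH GH; apply/forall_inP => X /consH.
by apply: contra => XG; apply: subset_trans GH.
Qed.

Lemma srcU_setU U V : srcU (U :|: V) = srcU U :|: srcU V.
Proof. exact: imsetU. Qed.

Lemma tgtU_setU U V : tgtU (U :|: V) = tgtU U :|: tgtU V.
Proof. exact: imsetU. Qed.

Lemma sigmaU_src U p f : {in U &, injective fst} -> p \in U ->
  p.1 = blk I f -> sigmaU I U f = sigma I p.1 p.2 f.
Proof.
move=> srcU_inj Up pf; rewrite /sigmaU; case: pickP => [q /andP [Uq /eqP qf]|].
  by rewrite (srcU_inj q p) // qf.
by move=> /(_ p); rewrite Up pf eqxx.
Qed.

Lemma sigmaU_nosrc U f : blk I f \notin srcU U -> sigmaU I U f = f.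
Proof.
move=> nsrc; rewrite /sigmaU; case: pickP => // q /andP [Uq /eqP qf].
by case/imsetP: nsrc; exists q.
Qed.

Lemma sigmaU_sub_src U W f : U \subset W -> {in W &, injective fst} ->
  blk I f \in srcU U -> sigmaU I W f = sigmaU I U f.
Proof.
move=> UW srcW_inj /imsetP [p Up pf].
rewrite (sigmaU_src srcW_inj (subsetP UW p Up) (esym pf)).
by rewrite (sigmaU_src (sub_in2 (subsetP UW) srcW_inj) Up (esym pf)).
Qed.

Lemma sigmaU_setU U V : {in U :|: V &, injective fst} ->
  merge_transl (sigmaU I U) (sigmaU I V) =1 sigmaU I (U :|: V).
Proof.
move=> srcUV_inj f; rewrite /merge_transl.
have subl := sigmaU_sub_src (subsetUl U V) srcUV_inj.
have subr := sigmaU_sub_src (subsetUr U V) srcUV_inj.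
have [srcVf|nsrcVf] := boolP (blk I f \in srcU V).
  rewrite subr //; case: ifP => // moved.
  have [srcUf|/sigmaU_nosrc Uf] := boolP (blk I f \in srcU U).
    by rewrite -subl // subr.
  by rewrite Uf eqxx in moved.
rewrite (sigmaU_nosrc nsrcVf).
have [srcUf|nsrcUf] := boolP (blk I f \in srcU U).
  by rewrite subl //; case: eqP.
by rewrite !sigmaU_nosrc ?eqxx // srcU_setU inE negb_or nsrcUf.
Qed.

Lemma tgtU_free W (S : {set 'I_k}) : {in W, forall p, eqv I p.1 p.2} ->
  srcU W \subset S -> eqv_free S -> tgtU W :&: (S :\: srcU W) == set0.
Proof.
move=> eqvW srcS freeS; apply/eqP/setP => j; rewrite !inE.
apply/negP => /and3P [/imsetP [p Wp ->] nsrc Sp2].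
have srcp : p.1 \in srcU W by apply: imset_f.
by rewrite -(freeS _ _ (subsetP srcS _ srcp) Sp2 (eqvW p Wp)) srcp in nsrc.
Qed.

Section WellFormed.
Variables (natCN : CN -> Prop) (intra : RN -> Prop).
Hypothesis HI : is_dci I natCN intra.

Lemma sigma_id i f : f \in Fb I i -> sigma I i i f = f.
Proof.
case: HI => _ _ [eqv_refl _ _] [_ sigmaK sigma_trans _] _ fi.
by rewrite -(sigma_trans i i i f) ?sigmaK.
Qed.

Lemma blk_sigma s t f : eqv I s t -> blk I f = s -> blk I (sigma I s t f) = t.
Proof.
case: HI => _ _ _ [sigma_Fb _ _ _] _ st fs.
by have := sigma_Fb s t f st; rewrite !inE fs eqxx => /(_ isT) /eqP.
Qed.

Lemma natural_closed C : natural natCN intra C ->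
  exists G : {set F}, forall d, interp I C d <-> G \subset Defs.pi I d.
Proof.
case: HI => _ _ _ _ [_ natCN_closed intra_kappa].
elim: C => [||A nA|C IHC D IHD [/IHC [G GC] /IHD [H HD]]|r C _ []|C _ D _ _]
  //=.
- by exists (phi I (CAtom A)); apply: natCN_closed.
- by exists (G :|: H) => d; rewrite subUset GC HD; split => [[-> ->]|/andP []].
- move=> /intra_kappa [kappa [kappaE _ _ _ _]] _.
  by exists (kappa (phi I C)) => d; apply: kappaE.
- by exists (phi I C :&: phi I D).
Qed.

Lemma natural_interpE C : natural natCN intra C ->
  forall d, interp I C d <-> phi I C \subset Defs.pi I d.
Proof.
move=> /natural_closed [G GC] d; split; first exact: phi_sub.
move=> Cd; apply/(GC d)/(subset_trans _ Cd)/sub_phi => d'.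
exact: (proj1 (GC d')).
Qed.

Lemma phi_and C D : natural natCN intra C -> natural natCN intra D ->
  (exists d, interp I (CAnd C D) d) -> phi I (CAnd C D) = phi I C :|: phi I D.
Proof.
move=> nC nD [d0 [C0 D0]].
case: HI => _ [_ _ pi_consistent pi_onto] _ _ _.
apply/eqP; rewrite eqEsubset; apply/andP; split; last first.
  by apply: sub_phi => d [Cd Dd]; rewrite subUset !phi_sub.
have CD_d0 : phi I C :|: phi I D \subset Defs.pi I d0.
  by rewrite subUset !phi_sub.
have [d CDd] := pi_onto _ (consistent_sub (pi_consistent d0) CD_d0).
rewrite -CDd; apply: phi_sub.
by split; apply/natural_interpE; rewrite // CDd ?subsetUl ?subsetUr.
Qed.

Lemma deltaC_eqv_free E : (exists d, interp I E d) -> eqv_free (deltaC I E).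
Proof.
case=> d Ed i j /deltaCP [f Ef fi] /deltaCP [g Eg gj] ij.
case: HI => _ [_ _ pi_consistent _] _ _ [pair_conflict _ _].
have [//|nij] := eqVneq i j.
have fg : [set f; g] \in Xc I.
  by apply: pair_conflict ij nij _ _; rewrite inE ?fi ?gj.
have := pi_consistent d => /forall_inP /(_ _ fg) /negP; case.
by apply/subsetP => x /set2P [] ->; apply: (subsetP (phi_sub Ed)).
Qed.

Lemma valid_U_free W (Sx Sy : {set 'I_k}) : {in W, forall p, eqv I p.1 p.2} ->
  srcU W \subset Sx -> tgtU W \subset Sy -> eqv_free Sx -> eqv_free Sy ->
  valid_U I W.
Proof.
case: HI => _ _ [_ eqv_sym eqv_trans] _ _ eqvW srcSx tgtSy freeSx freeSy.
have srcx p : p \in W -> p.1 \in Sx by move=> Wp; apply/(subsetP srcSx)/imset_f.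
have tgty p : p \in W -> p.2 \in Sy by move=> Wp; apply/(subsetP tgtSy)/imset_f.
split=> // p q Wp Wq pq; apply: injective_projections => //.
- apply: freeSy (tgty p Wp) (tgty q Wq) (eqv_trans p.1 _ _ _ _).
    by rewrite eqv_sym eqvW.
  by rewrite pq eqvW.
- apply: freeSx (srcx p Wp) (srcx q Wq) (eqv_trans p.2 _ _ (eqvW p Wp) _).
  by rewrite pq eqv_sym eqvW.
Qed.

Lemma tgtU_deltaC U C D : valid_U I U -> phi I D = sigmaU I U @: phi I C ->
  srcU U \subset deltaC I C -> tgtU U \subset deltaC I D.
Proof.
move=> [eqvU srcU_inj _] phiD srcC; apply/subsetP => _ /imsetP [p Up ->].
have /deltaCP [f Cf fp] : p.1 \in deltaC I C by apply/(subsetP srcC)/imset_f.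
apply/deltaCP; exists (sigmaU I U f); first by rewrite phiD imset_f.
by rewrite (sigmaU_src srcU_inj Up (esym fp)) (blk_sigma (eqvU p Up) fp).
Qed.

Lemma sigmaU_free_fix W (S : {set 'I_k}) f : valid_U I W -> tgtU W \subset S ->
  eqv_free S -> blk I f \in S -> sigmaU I W f = f.
Proof.
move=> [eqvW srcW_inj _] tgtS freeS fS.
have [/imsetP [p Wp pf]|/sigmaU_nosrc//] := boolP (blk I f \in srcU W).
have p12 : p.1 = p.2.
  by apply: freeS (eqvW p Wp); [rewrite -pf | apply/(subsetP tgtS)/imset_f].
by rewrite (sigmaU_src srcW_inj Wp (esym pf)) -p12 sigma_id // inE pf.
Qed.

Lemma sigmaU_sub U W (S : {set 'I_k}) f : U \subset W -> valid_U I W ->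
  tgtU W \subset S -> eqv_free S -> blk I (sigmaU I U f) \in S ->
  sigmaU I W f = sigmaU I U f.
Proof.
move=> UW validW tgtS freeS.
have [srcf _|/sigmaU_nosrc Uf] := boolP (blk I f \in srcU U).
  by case: validW => _ srcW_inj _; apply: sigmaU_sub_src.
by rewrite Uf => fS; apply: sigmaU_free_fix validW tgtS freeS fS.
Qed.

Lemma in_mu_and Cx Dx Cy Dy tau tau' :
  natural natCN intra Cx -> natural natCN intra Dx ->
  natural natCN intra Cy -> natural natCN intra Dy ->
  (exists d, interp I (CAnd Cx Dx) d) -> (exists d, interp I (CAnd Cy Dy) d) ->
  in_mu I Cx Cy tau -> in_mu I Dx Dy tau' ->
  in_mu I (CAnd Cx Dx) (CAnd Cy Dy) (merge_transl tau tau').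
Proof.
move=> nCx nDx nCy nDy satx saty [U [validU tauU phiCy srcCx _]].
move=> [V [validV tauV phiDy srcDx _]].
rewrite (eq_imset _ tauU) in phiCy; rewrite (eq_imset _ tauV) in phiDy.
have phix := phi_and nCx nDx satx; have phiy := phi_and nCy nDy saty.
have freex := deltaC_eqv_free satx; have freey := deltaC_eqv_free saty.
have eqvW : {in U :|: V, forall p, eqv I p.1 p.2}.
  by case: validU validV => eqvU _ _ [eqvV _ _] p /setUP [/eqvU|/eqvV].
have srcW : srcU (U :|: V) \subset deltaC I (CAnd Cx Dx).
  by rewrite (deltaC_and phix) srcU_setU setUSS.
have tgtW : tgtU (U :|: V) \subset deltaC I (CAnd Cy Dy).
  rewrite (deltaC_and phiy) tgtU_setU.
  by apply: setUSS; [apply: tgtU_deltaC phiCy srcCx|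
                     apply: tgtU_deltaC phiDy srcDx].
have validW := valid_U_free eqvW srcW tgtW freex freey.
have mergeW : merge_transl tau tau' =1 sigmaU I (U :|: V).
  move=> f; rewrite -sigmaU_setU; last by case: validW.
  by rewrite /merge_transl !tauU !tauV.
exists (U :|: V); split=> //; last exact: tgtU_free.
rewrite (eq_imset _ mergeW) phiy phix imsetU phiCy phiDy.
congr (_ :|: _); apply: eq_in_imset => f phif; symmetry.
- apply: sigmaU_sub (subsetUl U V) validW tgtW freey _.
  by rewrite (deltaC_and phiy) inE blk_deltaC // phiCy imset_f.
- apply: sigmaU_sub (subsetUr U V) validW tgtW freey _.
  rewrite (deltaC_and phiy) inE (blk_deltaC (C := Dy)) ?orbT //.
  by rewrite phiDy imset_f.
Qed.

End WellFormed.
End Translations.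

Theorem proposition8 (CN RN : Type) (natCN : CN -> Prop) (intra : RN -> Prop)
    (F : finType) (k : nat) (Delta : Type) (I : dci CN RN F k Delta)
    (HI : is_dci I natCN intra)
    (C1 C2 C3 C4 D1 D2 D3 D4 : concept CN RN)
    (nC1 : natural natCN intra C1) (nC2 : natural natCN intra C2)
    (nC3 : natural natCN intra C3) (nC4 : natural natCN intra C4)
    (nD1 : natural natCN intra D1) (nD2 : natural natCN intra D2)
    (nD3 : natural natCN intra D3) (nD4 : natural natCN intra D4)
    (ne1 : exists d, interp I (CAnd C1 D1) d)
    (ne2 : exists d, interp I (CAnd C2 D2) d)
    (ne3 : exists d, interp I (CAnd C3 D3) d)
    (ne4 : exists d, interp I (CAnd C4 D4) d)
    (anC : sat_analogy I C1 C2 C3 C4)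
    (anD : sat_analogy I D1 D2 D3 D4) :
  sat_analogy I (CAnd C1 D1) (CAnd C2 D2) (CAnd C3 D3) (CAnd C4 D4).
Proof.
case: anC => tau [C12 C34]; case: anD => tau' [D12 D34].
by exists (merge_transl tau tau'); split; apply: (in_mu_and HI).
Qed.
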